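(* For integers $n,m$ and $y=(y_1,y_2,y_3)\in Q$, \[\Phi_{n,m;y}(u,v;1,1;z,w;q)=\Delta_y(z,w;q)\,\frac{\Phi_{n,m;y}(u,v;z,w;q)-zwq^{m+y_1-1}\Phi_{n,m;y}(uq^{-y_{12}}/z,\,vq^{-y_{23}}/w;z,w;q)}{1-zwq^{-1}}.\]
   Context: $Q=\{y\in\mathbb{Z}^3:y_1+y_2+y_3=0\}$, $y_{ij}:=y_i-y_j$. For $n\in\mathbb{Z}$, $(a;q)_n=(a;q)_\infty/(aq^n;q)_\infty$ ($1/(q;q)_n=0$ for $n<0$), $(a_1,\dots,a_k;q)_n=\prod_i(a_i;q)_n$. $\Phi_{n,m}(z,w;q):=\frac{(zwq;q)_{n+m}}{(q,zq,zwq;q)_n(q,wq,zwq;q)_m}$; $\Phi_{n,m}(u,v;z,w;q):=\Phi_{n,m}(z/q,w;q)-\frac{uz}{(z;q)_2}\Phi_{n-1,m}(zq,w/q;q)+\frac{uvzw^2}{(w,zw;q)_2}\Phi_{n-1,m-1}(z,wq;q)$; $\Phi_{n,m;y}(z,w;q):=\frac{(zwq;q)_{n+m}}{(q;q)_{n-y_1}(zq;q)_{n-y_2}(zwq;q)_{n-y_3}(q;q)_{m+y_3}(wq;q)_{m+y_2}(zwq;q)_{m+y_1}}$; $\Phi_{n,m;y}(u,v;z,w;q):=\frac{\Phi_{n-y_1,m-y_1-y_2}(u,v;zq^{y_{12}},wq^{y_{23}};q)}{(zq;q)_{y_{12}}(wq;q)_{y_{23}}(zwq;q)_{y_{13}}}$.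 With $\rho=(1,2,3)$, $\sigma\in S_3$ in one-line notation and $\chi$ the indicator, $\Phi_{n,m}(u,v;c,d;z,w;q):=\sum_{\sigma\in S_3}\operatorname{sgn}(\sigma)(uz)^{\sigma_1-1}(v/d)^{\chi(\sigma_3=1)}(c/u)^{\chi(\sigma_1=3)}(dw)^{3-\sigma_3}\Phi_{n,m;\sigma-\rho}(z/q,w/q;q)$, and \[\Phi_{n,m;y}(u,v;c,d;z,w;q):=\frac{\Phi_{n-y_1,m-y_1-y_2}(u,v;c,d;zq^{y_{12}},wq^{y_{23}};q)}{(z;q)_{y_{12}}(w;q)_{y_{23}}(zw/q;q)_{y_{13}}}.\] Finally $\Delta_y(z,w;q):=\frac{(1-zq^{y_{12}})(1-wq^{y_{23}})(1-zwq^{y_{13}})}{(1-z)(1-w)(1-zw)}$. *)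

(* identities of rational functions, stated in the field of
   rational functions Q(u,v,z,w,q) = {fraction {mpoly rat[5]}}. *)
From HB Require Import structures.
From mathcomp Require Import all_boot all_order all_algebra all_fingroup.
From mathcomp Require Import mpoly fraction.
Set Implicit Arguments. Unset Strict Implicit. Unset Printing Implicit Defensive.
Import Order.TTheory GRing.Theory Num.Theory.
Local Open Scope ring_scope.

Section QPoch.
Variables (K : fieldType) (q : K).

Definition poch (a : K) (n : int) : K :=
  match n with
  | Posz k => \prod_(i < k) (1 - a * q ^+ i)
  | Negz k => (\prod_(i < k.+1) (1 - a * q ^- i.+1))^-1
  end.

(* 1/(a;q)_n, with the convention 1/(q;q)_n = 0 for n < 0 (this is
   automatic: the product below contains the factor 1 - q q^{-1} = 0). *)
Definition invpoch (a : K) (n : int) : K :=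
  match n with
  | Posz k => (\prod_(i < k) (1 - a * q ^+ i))^-1
  | Negz k => \prod_(i < k.+1) (1 - a * q ^- i.+1)
  end.

Definition Phi0 (n m : int) (z w : K) : K :=
  poch (z * w * q) (n + m)
  * invpoch q n * invpoch (z * q) n * invpoch (z * w * q) n
  * invpoch q m * invpoch (w * q) m * invpoch (z * w * q) m.

Definition Phi1 (n m : int) (u v z w : K) : K :=
  Phi0 n m (z / q) w
  - u * z / poch z 2 * Phi0 (n - 1) m (z * q) (w / q)
  + u * v * z * w ^+ 2 / (poch w 2 * poch (z * w) 2) * Phi0 (n - 1) (m - 1) z (w * q).

Definition Phiy0 (n m y1 y2 y3 : int) (z w : K) : K :=
  poch (z * w * q) (n + m)
  * invpoch q (n - y1) * invpoch (z * q) (n - y2) * invpoch (z * w * q) (n - y3)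
  * invpoch q (m + y3) * invpoch (w * q) (m + y2) * invpoch (z * w * q) (m + y1).

Definition Phiy1 (n m y1 y2 y3 : int) (u v z w : K) : K :=
  Phi1 (n - y1) (m - y1 - y2) u v (z * q ^ (y1 - y2)) (w * q ^ (y2 - y3))
  / (poch (z * q) (y1 - y2) * poch (w * q) (y2 - y3) * poch (z * w * q) (y1 - y3)).

(* Phi_{n,m}(u,v;c,d;z,w;q); a permutation s : 'S_3 of {0,1,2} encodes the
   one-line notation sigma_i = s (i-1) + 1, so sigma - rho =
   (s 0 - 0, s 1 - 1, s 2 - 2). *)
Definition Phi2 (n m : int) (u v c d z w : K) : K :=
  \sum_(s : 'S_3)
    (-1) ^+ odd_perm s
    * (u * z) ^+ (s ord0)
    * (v / d) ^+ (s ord_max == ord0 :> 'I_3)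
    * (c / u) ^+ (s ord0 == ord_max :> 'I_3)
    * (d * w) ^+ (2 - s ord_max)
    * Phiy0 n m ((s ord0)%:Z - 0) ((s (inord 1 : 'I_3))%:Z - 1) ((s ord_max)%:Z - 2)
            (z / q) (w / q).

Definition Phiy2 (n m y1 y2 y3 : int) (u v c d z w : K) : K :=
  Phi2 (n - y1) (m - y1 - y2) u v c d (z * q ^ (y1 - y2)) (w * q ^ (y2 - y3))
  / (poch z (y1 - y2) * poch w (y2 - y3) * poch (z * w / q) (y1 - y3)).

Definition Delta (y1 y2 y3 : int) (z w : K) : K :=
  (1 - z * q ^ (y1 - y2)) * (1 - w * q ^ (y2 - y3)) * (1 - z * w * q ^ (y1 - y3))
  / ((1 - z) * (1 - w) * (1 - z * w)).

End QPoch.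

Definition RF : fieldType := {fraction {mpoly rat[5]}}.
Definition var (i : 'I_5) : RF := @FracField.tofrac {mpoly rat[5]} 'X_i.
Definition uu : RF := var (inord 0).
Definition vv : RF := var (inord 1).
Definition zz : RF := var (inord 2).
Definition ww : RF := var (inord 3).
Definition qq : RF := var (inord 4).

From HB Require Import structures.
From mathcomp Require Import all_boot all_order all_algebra all_fingroup.
From mathcomp Require Import mpoly fraction.
From mathcomp Require Import ring zify.
Set Implicit Arguments. Unset Strict Implicit. Unset Printing Implicit Defensive.
Import Order.TTheory GRing.Theory Num.Theory.
Local Open Scope ring_scope.

(* For y = 0 the identity is an identity between rational functions of q^n, q^m and
   finitely many q-shifted factorials: in each of the six terms of the alternating sum
   over S_3, and in each term of Phi_{n,m}(u,v;z,w;q), every factorial differs from one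
   of (z;q)_n, (w;q)_m, (zw/q;q)_n, (zw/q;q)_m, (zw/q;q)_{n+m}, 1/(q;q)_n, 1/(q;q)_m by
   a bounded shift of its argument and length, i.e. by a finite product.  Splitting off
   these base factors leaves an identity that field arithmetic checks.  The general y
   reduces to y = 0: Phi_{n,m;y} is Phi_{n-y1,m-y1-y2} at z q^{y12}, w q^{y23}, and
   trading (zq;q)_k for (z;q)_k (and likewise for w, zw) produces exactly Delta_y.
   Finally the indeterminates of Q(u,v,z,w,q) are generic (z, w, zw not in q^Z, q not
   a root of unity), as specialising q to 1 or 2 shows. *)

(* Literal ordinals, unlike [inord 1], so that permutations of ['I_3] compute. *)
Definition i0 : 'I_3 := @Ordinal 3 0 isT.
Definition i1 : 'I_3 := @Ordinal 3 1 isT.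
Definition i2 : 'I_3 := @Ordinal 3 2 isT.

Definition perm3_seq : seq 'S_3 :=
  [:: 1; tperm i0 i1; tperm i1 i2; tperm i0 i2;
      tperm i0 i1 * tperm i0 i2; tperm i0 i2 * tperm i0 i1]%g.

Lemma perm3_seq_uniq : uniq perm3_seq.
Proof.
apply: (@map_uniq _ _ (fun s : 'S_3 => (val (s i0), val (s i1), val (s i2)))).
by rewrite /perm3_seq /= !permM ?perm1 !permE.
Qed.

Lemma big_perm3 (R : nmodType) (F : 'S_3 -> R) :
  \sum_(s : 'S_3) F s = F 1%g + F (tperm i0 i1) + F (tperm i1 i2) + F (tperm i0 i2)
                      + F (tperm i0 i1 * tperm i0 i2)%g + F (tperm i0 i2 * tperm i0 i1)%g.
Proof.
have enumE : perm_eq (index_enum 'S_3) perm3_seq.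
  rewrite uniq_perm ?index_enum_uniq ?perm3_seq_uniq // => s.
  rewrite mem_index_enum; apply/esym/negPn/negP => s_out.
  have := @uniq_leq_size _ (s :: perm3_seq) (enum 'S_3).
  rewrite cons_uniq s_out perm3_seq_uniq -cardT card_Sn => /(_ isT).
  by move=> /(_ (fun x _ => mem_enum _ x)).
by rewrite (perm_big _ enumE) /= !big_cons big_nil addr0 !addrA.
Qed.

Lemma Negz0_add1 : Negz 0 + 1 = 0. Proof. by []. Qed.
Lemma NegzS_add1 k : Negz k.+1 + 1 = Negz k. Proof. rewrite !NegzE; lia. Qed.

Section QPochhammer.
Variables (K : fieldType) (q : K).
Hypothesis q_neq0 : q != 0.

Definition generic (a : K) := forall k : int, 1 - a * q ^ k != 0.

Lemma generic_subr1 a : generic a -> 1 - a != 0.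
Proof. by move=> ga; have := ga 0; rewrite expr0z mulr1. Qed.

Lemma generic_factor_neq0 a k s c : generic a -> s != 0 ->
  c = s * (1 - a * q ^ k) -> c != 0.
Proof. by move=> ga s_neq0 ->; rewrite mulf_neq0. Qed.

Lemma genericMq a k : generic a -> generic (a * q ^ k).
Proof. by move=> ga l; rewrite -mulrA -expfzDr. Qed.

Lemma invpochE a n : invpoch q a n = (poch q a n)^-1.
Proof. by case: n => [k|k] //=; rewrite invrK. Qed.

Lemma poch_neq0 a n : generic a -> poch q a n != 0.
Proof.
move=> ga; case: n => [k|k] /=; rewrite ?invr_eq0 prodf_seq_neq0; apply/allP => i _.
  exact: (ga (Posz i)).
exact: (ga (Negz i)).
Qed.

Lemma pochSr a n : generic a -> poch q a (n + 1) = poch q a n * (1 - a * q ^ n).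
Proof.
move=> ga; case: n => [k|[|k]].
- by rewrite -PoszD addn1 /poch big_ord_recr.
- rewrite Negz0_add1 /poch /= big_ord0 big_ord1 mulVf //.
  exact: (ga (Negz 0)).
- rewrite NegzS_add1 /poch [in RHS]big_ord_recr /= invfM -mulrA.
  by rewrite mulVf ?mulr1 //; exact: (ga (Negz k.+1)).
Qed.

Lemma pochSl a n : generic a -> poch q a (n + 1) = (1 - a) * poch q (a * q) n.
Proof.
move=> ga; have ga0 := generic_subr1 ga.
case: n => [k|[|k]].
- rewrite -PoszD addn1 /poch big_ord_recl /= expr0 mulr1.
  by congr (_ * _); apply: eq_bigr => i _; rewrite exprS mulrA.
- by rewrite Negz0_add1 /poch /= big_ord0 big_ord1 mulfK // mulfV.
- rewrite NegzS_add1 /poch [in RHS]big_ord_recl /= mulfK //.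
  rewrite invfM mulrA mulfV // mul1r; congr (_^-1); apply: eq_bigr => i _.
  by rewrite [q ^+ (bump 0 i).+1]exprS invfM mulrA mulfK.
Qed.

Lemma pochD a n k : generic a ->
  poch q a (n + k) = poch q a n * poch q (a * q ^ n) k.
Proof.
move=> ga; have gb := genericMq n ga.
have stepE l : (poch q a (n + l) = poch q a n * poch q (a * q ^ n) l) <->
               (poch q a (n + (l + 1)) = poch q a n * poch q (a * q ^ n) (l + 1)).
  rewrite addrA !pochSr // expfzDr // !mulrA.
  have hf : 1 - a * q ^ n * q ^ l != 0 by rewrite -mulrA -expfzDr.
  by split=> [-> //|/(mulIf hf)].
case: k => [j|j].
  elim: j => [|j IH]; first by rewrite addr0 /poch /= big_ord0 mulr1.
  by rewrite -addn1 PoszD; apply/(stepE j).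
elim: j => [|j IH].
  by apply/(stepE (Negz 0)); rewrite Negz0_add1 addr0 /poch /= big_ord0 mulr1.
by apply/(stepE (Negz j.+1)); rewrite NegzS_add1.
Qed.

Lemma pochMq a n : generic a ->
  poch q (a * q) n = poch q a n * (1 - a * q ^ n) / (1 - a).
Proof.
by move=> ga; rewrite -pochSr // pochSl // mulrAC mulfV ?mul1r ?generic_subr1.
Qed.

Lemma poch0 b : poch q b 0 = 1. Proof. by rewrite /poch /= big_ord0. Qed.
Lemma poch1 b : poch q b 1 = 1 - b. Proof. by rewrite /poch /= big_ord1 mulr1. Qed.
Lemma poch2 b : poch q b 2 = (1 - b) * (1 - b * q).
Proof. by rewrite /poch /= !big_ord_recr big_ord0 /= mul1r mulr1. Qed.
Lemma poch3 b : poch q b 3 = (1 - b) * (1 - b * q) * (1 - b * q ^+ 2).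
Proof. by rewrite /poch /= !big_ord_recr big_ord0 /= mul1r mulr1. Qed.
Lemma pochN1 b : poch q b (-1) = (1 - b / q)^-1.
Proof. by rewrite /poch /= big_ord1. Qed.

(* [poch q] and [invpoch q q] under names that the normalisation tactics below do
   not rewrite: they mark the base factors into which every other factorial is split. *)
Definition poch_base a n := poch q a n.
Definition qfact_inv n := invpoch q q n.

Lemma poch_shift a c (j : nat) n B t : generic a -> c = a * q ^+ j ->
  n + j%:Z = B + t -> poch q c n = poch_base a B * poch q (a * q ^ B) t / poch q a j.
Proof.
move=> ga -> e.
by rewrite /poch_base -pochD // -e addrC pochD // mulrAC mulfV ?mul1r ?poch_neq0.
Qed.

Section QFactorial.
Hypothesis q_unity : forall k : nat, 1 - q ^+ k.+1 != 0.

Lemma invpoch_qS n : invpoch q q n = invpoch q q (n + 1) * (1 - q ^ (n + 1)).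
Proof.
rewrite expfzDr // expr1z [_ * q]mulrC; case: n => [k|[|k]].
- rewrite -PoszD addn1 /invpoch big_ord_recr /= invfM -mulrA.
  by rewrite mulVf ?mulr1 // -exprS.
- by rewrite Negz0_add1 /invpoch /= big_ord0 invr1 mul1r big_ord1.
- by rewrite NegzS_add1 /invpoch /= [in LHS]big_ord_recr.
Qed.

Lemma qfact_inv_shift n B (t : nat) : n + t%:Z = B ->
  invpoch q q n = qfact_inv B * \prod_(i < t) (1 - q ^ B / q ^+ i).
Proof.
elim: t n => [|t IH] n e; first by rewrite big_ord0 mulr1 -e addr0.
rewrite invpoch_qS (IH (n + 1)); last by lia.
rewrite big_ord_recr /= -mulrA; congr (_ * (_ * (1 - _))).
have -> : B = n + 1 + t by rewrite -e; lia.
by rewrite (expfzDr (n + 1) t) // mulfK // expf_neq0.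
Qed.

End QFactorial.
End QPochhammer.

(* An offset [d] from the base has zero coefficients on [N] and [M],
   so evaluating it at [N = M = 0] yields its value as a closed integer. *)
Ltac index_base n N M :=
  lazymatch n with
  | context [N] => lazymatch n with context [M] => constr:(N + M) | _ => N end
  | _ => M
  end.

Ltac eval_offset d N M :=
  let d := eval pattern N, M in d in
  lazymatch d with ?F _ _ => eval vm_compute in (F 0 0) end.

Ltac split_qfact q hq hq1 N M :=
  repeat match goal with |- context [invpoch q q ?n] =>
    let B := index_base n N M in
    lazymatch eval_offset (n - B) N M with
    | Negz ?t => rewrite (qfact_inv_shift hq hq1 (n := n) (B := B) (t := t.+1)); [|lia]
    | Posz 0 => rewrite (qfact_inv_shift hq hq1 (n := n) (B := B) (t := 0)); [|lia]
    end
  end.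

Ltac expand_poch_lit q :=
  rewrite ?(poch0 q) ?(poch1 q) ?(poch2 q) ?(poch3 q) ?(pochN1 q).

(* A factorial argument [c] is [Z], [W] or [Z * W / q] times a power of [q]:
   [generic_base] picks that base and [qdeg] counts the factors [q] in [c]. *)
Ltac qdeg q c :=
  lazymatch c with
  | q => constr:(Posz 1)
  | ?x / ?y => let a := qdeg q x in let b := qdeg q y in constr:(a - b)
  | ?x * ?y => let a := qdeg q x in let b := qdeg q y in constr:(a + b)
  | _ => constr:(Posz 0)
  end.

Ltac generic_base q Z W c :=
  lazymatch c with
  | context [Z] => lazymatch c with context [W] => constr:(Z * W / q) | _ => Z end
  | _ => W
  end.

Ltac generic_proof Z W gZ gW gZW a :=
  lazymatch a with Z => gZ | W => gW | _ => gZW end.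

Ltac split_poch q hq N M Z W gZ gW gZW :=
  match goal with |- context [poch q ?c ?n] =>
    let a := generic_base q Z W c in
    let ga := generic_proof Z W gZ gW gZW a in
    let dc := qdeg q c in let da := qdeg q a in
    lazymatch eval vm_compute in (dc - da) with Posz ?j =>
      let e := fresh "e" in
      assert (e : c = a * q ^+ j) by (rewrite ?exprS ?expr0; field; done);
      let B := index_base n N M in
      let t := eval_offset (n + Posz j - B) N M in
      rewrite (poch_shift hq ga e (n := n) (B := B) (t := t)); [|lia]; clear e
    end;
    expand_poch_lit q
  end.

(* The side conditions left by [field] read [s - c != 0] with [s] = 1 or [q] and
   [c] a monomial; each is [s * (1 - a * q ^ k)] for the base [a] of [c]. *)
Ltac generic_factor_eq := rewrite ?expfzDr // ?expr0z ?expr1z ?exprN1 -?exprnP; field; done.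

Ltac generic_neq0 q N M Z W gZ gW gZW :=
  match goal with |- ?g =>
    let a := generic_base q Z W g in
    let ga := generic_proof Z W gZ gW gZW a in
    let with_exponent k :=
      first [ apply: (generic_factor_neq0 (k := k) (s := 1) ga);
                [ exact: oner_neq0 | generic_factor_eq ]
            | apply: (generic_factor_neq0 (k := k) (s := q) ga);
                [ done | generic_factor_eq ] ] in
    lazymatch g with
    | context [q ^ N] => first [ with_exponent N | with_exponent (N - 1) | with_exponent (N + 1) ]
    | context [q ^ M] => first [ with_exponent M | with_exponent (M - 1) | with_exponent (M + 1) ]
    | _ => first [ with_exponent (Posz 0) | with_exponent (Posz 1) | with_exponent (Posz 2) ]
    end
  end.

Section YZero.
Variables (K : fieldType) (q Z W u v : K) (N M : int).
Hypotheses (q_neq0 : q != 0) (q_unity : forall k : nat, 1 - q ^+ k.+1 != 0).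
Hypotheses (gZ : generic q Z) (gW : generic q W) (gZW : generic q (Z * W / q)).
Hypotheses (u_neq0 : u != 0) (Z_neq0 : Z != 0) (W_neq0 : W != 0).

Lemma Phi2_11 : Phi2 q N M u v 1 1 Z W * (1 - Z * W / q) =
  Phi1 q N M u v Z W - Z * W * q ^ (M - 1) * Phi1 q N M (u / Z) (v / W) Z W.
Proof.
rewrite /Phi2 big_perm3.
have -> : ord0 = i0 by exact: val_inj.
have -> : inord 1 = i1 by apply: val_inj; rewrite /= inordK.
have -> : ord_max = i2 by exact: val_inj.
rewrite !odd_permM ?odd_perm1 !odd_tperm !permM ?perm1 !permE /=.
rewrite /Phiy0 /Phi1 /Phi0.
split_qfact q q_neq0 q_unity N M.
expand_poch_lit q.
rewrite !big_ord_recr !big_ord0 /= !invpochE.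
repeat split_poch q q_neq0 N M Z W gZ gW gZW.
rewrite !expfzDr // exprN1.
field.
repeat (apply/andP; split).
all: first [ done | exact: oner_neq0 | exact: poch_neq0
           | generic_neq0 q N M Z W gZ gW gZW ].
Qed.
End YZero.

Lemma Phiy2_11 (K : fieldType) (q z w u v : K) (n m y1 y2 y3 : int)
  (hy : y1 + y2 + y3 = 0) (q_neq0 : q != 0) (q_unity : forall k : nat, 1 - q ^+ k.+1 != 0)
  (gz : generic q z) (gw : generic q w) (gzw : generic q (z * w))
  (u_neq0 : u != 0) (z_neq0 : z != 0) (w_neq0 : w != 0) :
  Phiy2 q n m y1 y2 y3 u v 1 1 z w
  = Delta q y1 y2 y3 z w
    * (Phiy1 q n m y1 y2 y3 u v z w
       - z * w * q ^ (m + y1 - 1)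
         * Phiy1 q n m y1 y2 y3 (u * q ^ (- (y1 - y2)) / z) (v * q ^ (- (y2 - y3)) / w) z w)
    / (1 - z * w * q ^ (-1)).
Proof.
set a := q ^ (y1 - y2); set b := q ^ (y2 - y3).
have a_neq0 : a != 0 by exact: expfz_neq0.
have b_neq0 : b != 0 by exact: expfz_neq0.
have gzwq : generic q (z * w / q) by rewrite -exprN1; exact: genericMq.
have gZW : generic q (z * a * (w * b) / q).
  have -> : z * a * (w * b) / q = z * w / q * q ^ (y1 - y3).
    by rewrite /a /b (_ : y1 - y3 = (y1 - y2) + (y2 - y3)) ?expfzDr //; [field | lia].
  exact: genericMq.
have := Phi2_11 v (n - y1) (m - y1 - y2) q_neq0 q_unity
          (genericMq q_neq0 (y1 - y2) gz) (genericMq q_neq0 (y2 - y3) gw) gZW u_neq0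
          (mulf_neq0 z_neq0 a_neq0) (mulf_neq0 w_neq0 b_neq0).
rewrite -/a -/b => Phi2E.
rewrite /Phiy2 /Phiy1 /Delta exprN1 -!invr_expz -/a -/b.
have -> : q ^ (m + y1 - 1) = q ^ (m - y1 - y2 - 1) * a * b.
  by rewrite -!expfzDr //; congr (_ ^ _); lia.
have zwE : z * w = z * w / q * q by rewrite divfK.
rewrite !pochMq // [in poch q (z * w) _]zwE pochMq //.
have qab : q ^ (y1 - y3) = a * b by rewrite -expfzDr //; congr (_ ^ _); lia.
rewrite qab.
have -> : u / a / z = u / (z * a) by rewrite invfM [z^-1 * _]mulrC mulrA.
have -> : v / b / w = v / (w * b) by rewrite invfM [w^-1 * _]mulrC mulrA.
rewrite -/a -/b.
move/esym/eqP: Phi2E; rewrite subr_eq => /eqP ->.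
have za : 1 - z * a != 0 := gz _.
have wb : 1 - w * b != 0 := gw _.
have zwab : 1 - z * w * (a * b) != 0 by rewrite -qab; exact: gzw.
have q_zw : q - z * w != 0.
  by apply: (generic_factor_neq0 (k := 0) (s := q) gzwq) => //; rewrite expr0z; field.
have q_zwab : q - z * w * (a * b) != 0.
  by apply: (generic_factor_neq0 (k := y1 - y3) (s := q) gzwq) => //; rewrite qab; field.
field.
by rewrite q_neq0 q_zw za wb zwab q_zwab (generic_subr1 gz) (generic_subr1 gw)
  (generic_subr1 gzw) (poch_neq0 _ gz) (poch_neq0 _ gw) (poch_neq0 _ gzwq).
Qed.

(* Stated over an arbitrary field: unifying [mulf_neq0] against terms of [RF]
   directly is prohibitively slow. *)
Lemma subr1_Negz_neq0 (K : fieldType) (x c : K) (j : nat) :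
  x != 0 -> x ^+ j.+1 - c != 0 -> 1 - c * x ^ Negz j != 0.
Proof.
move=> x_neq0 h; have xj_neq0 : x ^+ j.+1 != 0 by rewrite expf_neq0.
have -> : 1 - c * x ^ Negz j = (x ^+ j.+1 - c) / x ^+ j.+1.
  by rewrite -[x ^ Negz j]/((x ^+ j.+1)^-1); field.
by rewrite mulf_neq0 ?invr_eq0.
Qed.

Definition qpoint (x y : rat) (i : 'I_5) : rat := if nat_of_ord i == 4%N then x else y.

Lemma qpoint_q x y : qpoint x y (inord 4) = x.
Proof. by rewrite /qpoint inordK. Qed.

Lemma qpoint_var x y (j : nat) : (j < 4)%N -> qpoint x y (inord j) = y.
Proof. by move=> j_lt4; rewrite /qpoint inordK ?(ltn_trans j_lt4) // ltn_eqF. Qed.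

Lemma tofrac_neq0 (e : 'I_5 -> rat) (p : {mpoly rat[5]}) :
  p.@[e] != 0 -> FracField.tofrac p != 0 :> RF.
Proof. by apply: contraNneq => /eqP; rewrite tofrac_eq0 => /eqP ->; rewrite meval0. Qed.

Lemma var_neq0 i : var i != 0.
Proof. by apply: (@tofrac_neq0 (qpoint 2 2)); rewrite mevalXU /qpoint; case: ifP. Qed.

Lemma qq_unity (k : nat) : 1 - qq ^+ k.+1 != 0.
Proof.
rewrite /qq /var -rmorphXn -tofrac1 -rmorphB; apply: (@tofrac_neq0 (qpoint 2 2)).
rewrite mevalB meval1 rmorphXn /= mevalXU qpoint_q subr_eq0 eq_sym.
by rewrite gt_eqF // exprn_egt1.
Qed.

Lemma generic_tofrac (p : {mpoly rat[5]}) :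
  p.@[qpoint 1 2] != 1 -> generic qq (FracField.tofrac p).
Proof.
move=> p_neq1 [j|j].
  rewrite -exprnP /qq /var -rmorphXn -rmorphM -tofrac1 -rmorphB.
  apply: (@tofrac_neq0 (qpoint 1 2)).
  by rewrite mevalB meval1 mevalM rmorphXn /= mevalXU qpoint_q expr1n mulr1 subr_eq0 eq_sym.
apply: (@subr1_Negz_neq0 RF); first exact: var_neq0.
rewrite /qq /var -rmorphXn -rmorphB; apply: (@tofrac_neq0 (qpoint 1 2)).
by rewrite mevalB rmorphXn /= mevalXU qpoint_q expr1n subr_eq0 eq_sym.
Qed.

Lemma generic_zz : generic qq zz.
Proof. by apply: generic_tofrac; rewrite mevalXU qpoint_var. Qed.

Lemma generic_ww : generic qq ww.
Proof. by apply: generic_tofrac; rewrite mevalXU qpoint_var. Qed.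

Lemma generic_zzww : generic qq (zz * ww).
Proof. by rewrite -rmorphM; apply: generic_tofrac; rewrite mevalM !mevalXU !qpoint_var. Qed.

Theorem corollary4p10 (n m y1 y2 y3 : int) (hy : y1 + y2 + y3 = 0) :
  Phiy2 qq n m y1 y2 y3 uu vv 1 1 zz ww
  = Delta qq y1 y2 y3 zz ww
    * (Phiy1 qq n m y1 y2 y3 uu vv zz ww
       - zz * ww * qq ^ (m + y1 - 1)
         * Phiy1 qq n m y1 y2 y3 (uu * qq ^ (- (y1 - y2)) / zz)
                 (vv * qq ^ (- (y2 - y3)) / ww) zz ww)
    / (1 - zz * ww * qq ^ (-1)).
Proof.
exact: (Phiy2_11 vv n m hy (var_neq0 _) qq_unity generic_zz generic_ww generic_zzww
         (var_neq0 _) (var_neq0 _) (var_neq0 _)).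
Qed.
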